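(* For every $0<\alpha<\varepsilon<\frac{1}{2\omega}$ and every $z\in\mathbf H$, $$\Lambda_\alpha(z)\le\frac{\Lambda_\varepsilon(z)}{1-\omega\varepsilon}\le\frac{\Lambda_\alpha(z)}{1-2\omega\varepsilon}.$$
   Context: Let $\mathfrak I=(a,b)\subset\mathbb R$ be a bounded interval, $\mathcal H=L^2(\mathfrak I)$ with inner product $\langle\cdot,\cdot\rangle$ and norm $\|\cdot\|$. Let $A=-\partial_{xx}$ with domain $H^2(\mathfrak I)\cap H^1_0(\mathfrak I)$, $\lambda_1>0$ its first eigenvalue, $\mathcal H^r=D(A^{r/2})$, $\|u\|_r=\|A^{r/2}u\|$, $B=I+A$, and on $\mathcal H^r$ the inner product $(u,v)_r=\langle A^{(r-1)/2}B^{1/2}u,A^{(r-1)/2}B^{1/2}v\rangle$ with norm $|||u|||_r^2=\|u\|_{r-1}^2+\|u\|_r^2$. Set $\omega=\sqrt{(1+\lambda_1)/\lambda_1}$. Let $\mu:(0,\infty)\to[0,\infty)$, $\mu\not\equiv0$, nonincreasing, absolutely continuous, with $\kappa:=\int_0^\infty\mu(s)\,ds\in(0,\infty)$, $\int_0^\infty s\mu(s)\,ds=1$, $\lim_{s\to0^+}\mu(s)<\infty$, and $\mu'+\delta\mu\le0$ a.e. for some $\delta>0$. $\mathcal M=L^2_\mu(\mathbb R^+;\mathcal H^1)$ with norm $\|\eta\|_{\mathcal M}^2=\int_0^\infty\mu(s)\|\eta(s)\|_1^2ds$; $\mathbf H=\mathcal H^1\times\mathcal M$ with $\|(u,\eta)\|_{\mathbf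 H}^2=|||u|||_1^2+\|\eta\|_{\mathcal M}^2$. Given $f\in L^2(\mathfrak I)$, let $F(x)=\int_a^xf(y)\,dy$, and for $\varepsilon>0$ and $z=(u,\eta)\in\mathbf H$ define $$\Lambda_\varepsilon(z)=\|z\|_{\mathbf H}^2+\frac2\kappa\int_0^\infty\mu(s)\langle F,\eta_x(s)\rangle\,ds+\frac2\kappa\|F\|^2-\frac{\varepsilon}{\sqrt\kappa}\int_0^\infty\mu(s)(u,\eta(s))_1\,ds.$$ *)

From HB Require Import structures.
From mathcomp Require Import all_boot all_order all_algebra.
From mathcomp Require Import all_classical all_reals all_analysis.
Set Implicit Arguments. Unset Strict Implicit. Unset Printing Implicit Defensive.
Import Order.TTheory GRing.Theory Num.Theory.
Import numFieldNormedType.Exports.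
Local Open Scope classical_set_scope.
Local Open Scope ring_scope.

Section Defs.
Variable R : realType.
Local Notation leb := (@lebesgue_measure R).

Definition Itv (a b : R) : set R := `]a, b[.

Definition L2 (a b : R) (g : R -> R) : Prop :=
  measurable_fun (Itv a b) g /\
  leb.-integrable (Itv a b) (fun x => ((g x) ^+ 2)%:E).

Definition ipL2 (a b : R) (g h : R -> R) : R :=
  Rintegral leb (Itv a b) (fun x => g x * h x).
Definition nrm2 (a b : R) (g : R -> R) : R := ipL2 a b g g.

(* u ∈ H^1_0(a,b) = H^1 = D(A^{1/2}), with (weak) derivative ux ∈ L^2:
   u is the primitive of ux vanishing at a and at b. *)
Definition H10 (a b : R) (u ux : R -> R) : Prop :=
  L2 a b ux /\
  (forall x, a <= x <= b -> u x = Rintegral leb `[a, x] ux) /\ u b = 0.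

(* first Dirichlet eigenvalue of -d^2/dx^2 on (a,b) *)
Definition lambda1 (a b : R) : R := (pi / (b - a)) ^+ 2.
Definition omega (a b : R) : R := Num.sqrt ((1 + lambda1 a b) / lambda1 a b).

(* (u,v)_1 = <B^{1/2}u, B^{1/2}v> = <u,v> + <u_x,v_x> ;
   |||u|||_1^2 = ||u||^2 + ||u_x||^2 ;  ||u||_1 = ||u_x|| *)
Definition ip1 (a b : R) (u ux v vx : R -> R) : R :=
  ipL2 a b u v + ipL2 a b ux vx.

Definition Rplus_set : set R := `]0, +oo[.

Definition memory_kernel (mu : R -> R) : Prop :=
  (forall s, 0 < s -> 0 <= mu s) /\
  (exists s, 0 < s /\ mu s != 0) /\
  (forall s t, 0 < s -> s <= t -> mu t <= mu s) /\
  (* absolutely continuous (locally on (0,oo)) with a.e. derivative dmu,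
     satisfying mu' + delta mu <= 0 a.e. for some delta > 0 *)
  (exists dmu : R -> R,
     (forall s t, 0 < s -> s <= t -> leb.-integrable `[s, t] (EFin \o dmu)) /\
     (forall s t, 0 < s -> s <= t -> mu t - mu s = Rintegral leb `[s, t] dmu) /\
     exists delta : R, 0 < delta /\
       {ae leb, forall s, Rplus_set s -> dmu s + delta * mu s <= 0}) /\
  leb.-integrable Rplus_set (EFin \o mu) /\
  0 < Rintegral leb Rplus_set mu /\
  leb.-integrable Rplus_set (fun s => (s * mu s)%:E) /\
  Rintegral leb Rplus_set (fun s => s * mu s) = 1 /\
  cvg (mu s @[s --> 0^'+]).

Definition kappa (mu : R -> R) : R := Rintegral leb Rplus_set mu.

(* eta ∈ M = L^2_mu(R^+; H^1): eta s ∈ H^1 (with derivative etax s) for s>0,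
   (strongly) measurable in s (joint measurability), and finite M-norm. *)
Definition memory_elt (a b : R) (mu : R -> R) (eta etax : R -> R -> R) : Prop :=
  (forall s, 0 < s -> H10 a b (eta s) (etax s)) /\
  measurable_fun (Rplus_set `*` Itv a b) (fun p : R * R => etax p.1 p.2) /\
  leb.-integrable Rplus_set (fun s => (mu s * nrm2 a b (etax s))%:E).

Definition primF (a : R) (f : R -> R) : R -> R :=
  fun x => Rintegral leb `[a, x] f.

Definition normH2 (a b : R) (mu : R -> R) (u ux : R -> R) (etax : R -> R -> R) : R :=
  nrm2 a b u + nrm2 a b ux + Rintegral leb Rplus_set (fun s => mu s * nrm2 a b (etax s)).

Definition Lambda (a b : R) (f mu : R -> R) (eps : R)
    (u ux : R -> R) (eta etax : R -> R -> R) : R :=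
  normH2 a b mu u ux etax
  + 2 / kappa mu * Rintegral leb Rplus_set
                     (fun s => mu s * ipL2 a b (primF a f) (etax s))
  + 2 / kappa mu * nrm2 a b (primF a f)
  - eps / Num.sqrt (kappa mu) * Rintegral leb Rplus_set
                     (fun s => mu s * ip1 a b u ux (eta s) (etax s)).

End Defs.

From HB Require Import structures.
From mathcomp Require Import all_boot all_order all_algebra.
From mathcomp Require Import all_classical all_reals all_analysis.
From mathcomp Require Import ring lra measurable_realfun.
Import Order.TTheory GRing.Theory Num.Theory.
Import numFieldNormedType.Exports.
Local Open Scope ring_scope.

(* The functional is affine in the parameter: Lambda_eps = Lambda_0 - eps S
   with S = kappa^(-1/2) int mu (u, eta)_1, so both inequalities reduce to
   elementary algebra once |S| <= omega Lambda_0 and 0 < alpha < eps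
   < 1 / (2 omega).  Young's inequality on the F-term gives
   Lambda_0 >= |||u|||_1^2 + ||eta||_M^2 / 2.  Young's inequality on (u, eta)_1,
   together with the Poincare inequality ||v||^2 <= (b - a)^2 / 6 ||v_x||^2
   (from v(x)^2 <= (x - a)(b - x) / (b - a) ||v_x||^2) and pi^2 <= 12, bounds
   |S| by omega (|||u|||_1^2 + ||eta||_M^2 / 2). *)

Section integral_bounds.
Context {R : realType}.
Local Notation leb := (@lebesgue_measure R).
Local Open Scope classical_set_scope.
Implicit Types (D : set (measurableTypeR R)) (f g h G : R -> R).

Lemma ge0_le_integral_nonmeas D (f1 f2 : R -> \bar R) :
  (forall x, D x -> (0 <= f1 x)%E) -> (forall x, D x -> (f1 x <= f2 x)%E) ->
  (\int[leb]_(x in D) f1 x <= \int[leb]_(x in D) f2 x)%E.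
Proof.
move=> f10 f12.
have f20 x : D x -> (0 <= f2 x)%E by move=> Dx; exact: le_trans (f10 x Dx) (f12 x Dx).
rewrite (ge0_integralE leb f10) (ge0_integralE leb f20).
apply: ereal_sup_le => _ [s sf <-]; exists s => //= x.
apply: le_trans (sf x) _; rewrite /patch; case: ifP => // /set_mem Dx.
exact: f12.
Qed.

(* No measurability of [h] is needed: the integrals of its positive and
   negative parts are suprema over simple functions, both bounded by [\int G]. *)
Lemma normr_Rintegral_le D h G : measurable D ->
  leb.-integrable D (EFin \o G) -> (forall x, D x -> `|h x| <= G x) ->
  `|Rintegral leb D h| <= Rintegral leb D G.
Proof.
move=> mD iG hG.
have G0 x : D x -> 0 <= G x by move=> Dx; exact: le_trans (hG x Dx).
have /fin_numPlt/andP[_ Gfin] := integrable_fin_num mD iG.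
have G0' : (0 <= \int[leb]_(x in D) (EFin \o G) x)%E.
  by apply: integral_ge0 => x Dx; rewrite lee_fin G0.
have Pp : (\int[leb]_(x in D) ((EFin \o h)^\+ x) <= \int[leb]_(x in D) (EFin \o G) x)%E.
  apply: ge0_le_integral_nonmeas => x Dx; first exact: funepos_ge0.
  rewrite funeposE /= -EFin_max lee_fin ge_max G0 // andbT.
  exact: le_trans (ler_norm _) (hG x Dx).
have Pn : (\int[leb]_(x in D) ((EFin \o h)^\- x) <= \int[leb]_(x in D) (EFin \o G) x)%E.
  apply: ge0_le_integral_nonmeas => x Dx; first exact: funeneg_ge0.
  rewrite funenegE /= -EFin_max lee_fin ge_max G0 // andbT.
  by apply: le_trans (hG x Dx); rewrite -normrN; exact: ler_norm.
have P0 : (0 <= \int[leb]_(x in D) ((EFin \o h)^\+ x))%E.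
  by apply: integral_ge0 => x _; exact: funepos_ge0.
have N0 : (0 <= \int[leb]_(x in D) ((EFin \o h)^\- x))%E.
  by apply: integral_ge0 => x _; exact: funeneg_ge0.
rewrite /Rintegral integralE.
move: Pp Pn P0 N0 G0' Gfin.
case: (\int[leb]_(x in D) _)%E => [p| |]; case: (\int[leb]_(x in D) _)%E => [n| |];
  case: (\int[leb]_(x in D) _)%E => [m| |] //=.
rewrite !lee_fin ler_norml => *; apply/andP; split; lra.
Qed.

Lemma integrableZl_fun {D f} k : measurable D ->
  leb.-integrable D (EFin \o f) -> leb.-integrable D (EFin \o (fun x => k * f x)).
Proof.
by move=> mD /(integrableZl mD k); apply: eq_integrable => // x _ /=; rewrite EFinM.
Qed.

Lemma integrable_lincomb {D f g} k l : measurable D ->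
  leb.-integrable D (EFin \o f) -> leb.-integrable D (EFin \o g) ->
  leb.-integrable D (EFin \o (fun x => k * f x + l * g x)).
Proof.
move=> mD intf intg.
have := integrableD mD (integrableZl_fun k mD intf) (integrableZl_fun l mD intg).
by apply: eq_integrable => // x _ /=; rewrite EFinD.
Qed.

Lemma Rintegral_lincomb D f g k l : measurable D ->
  leb.-integrable D (EFin \o f) -> leb.-integrable D (EFin \o g) ->
  Rintegral leb D (fun x => k * f x + l * g x) =
    k * Rintegral leb D f + l * Rintegral leb D g.
Proof.
move=> mD intf intg.
by rewrite RintegralD ?RintegralZl // ?integrableZl_fun.
Qed.

Lemma normrM_le_young (r x y : R) : 0 < r ->
  `|x * y| <= r / 2 * x ^+ 2 + 1 / (2 * r) * y ^+ 2.
Proof.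
move=> r0; rewrite normrM -(real_normK (num_real x)) -(real_normK (num_real y)).
rewrite -subr_ge0.
have -> : r / 2 * `|x| ^+ 2 + 1 / (2 * r) * `|y| ^+ 2 - `|x| * `|y| =
    (r * `|x| - `|y|) ^+ 2 / (2 * r).
  by field; rewrite gt_eqF.
by rewrite divr_ge0 ?sqr_ge0 // ltW // mulr_gt0.
Qed.

Lemma normr_Rintegral_mul_le_young {D f g} r : measurable D ->
  leb.-integrable D (fun x => (f x ^+ 2)%:E) ->
  leb.-integrable D (fun x => (g x ^+ 2)%:E) -> 0 < r ->
  `|Rintegral leb D (fun x => f x * g x)| <=
    r / 2 * Rintegral leb D (fun x => f x ^+ 2)
    + 1 / (2 * r) * Rintegral leb D (fun x => g x ^+ 2).
Proof.
move=> mD intf2 intg2 r0.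
rewrite -Rintegral_lincomb //; apply: normr_Rintegral_le => //.
  exact: integrable_lincomb.
by move=> x _; exact: normrM_le_young.
Qed.

(* Optimizing Young's inequality over [r] recovers Cauchy--Schwarz. *)
Lemma sqr_le_of_young (I A B : R) : 0 < A -> 0 <= B ->
  (forall r, 0 < r -> `|I| <= r / 2 * A + 1 / (2 * r) * B) -> I ^+ 2 <= A * B.
Proof.
move=> A0 B0 young.
have [->|I0] := eqVneq I 0; first by rewrite expr0n /= mulr_ge0 // ltW.
have nI : 0 < `|I| by rewrite normr_gt0.
have := young (`|I| / A) (divr_gt0 nI A0).
have -> : `|I| / A / 2 * A + 1 / (2 * (`|I| / A)) * B = `|I| / 2 + A * B / (2 * `|I|).
  by field; rewrite !gt_eqF.
move=> h; have : `|I| / 2 <= A * B / (2 * `|I|) by lra.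
rewrite ler_pdivlMr ?mulr_gt0 // -(real_normK (num_real I)) expr2; lra.
Qed.

Lemma continuous_integrable_itv f (x y : R) b0 b1 : continuous f ->
  leb.-integrable [set` Interval (BSide b0 x) (BSide b1 y)] (EFin \o f).
Proof.
move=> cf.
have := continuous_compact_integrable (@segment_compact _ x y) (continuous_subspaceT cf).
by apply: integrableS => //; apply: subset_itvScc; rewrite bnd_simp.
Qed.

Lemma integrable_itv_cst (x y k : R) b0 b1 :
  leb.-integrable [set` Interval (BSide b0 x) (BSide b1 y)] (EFin \o cst k).
Proof. by apply: continuous_integrable_itv => ?; exact: cvg_cst. Qed.

Lemma Rintegral_itv_one (x y : R) b0 b1 : x <= y ->
  Rintegral leb [set` Interval (BSide b0 x) (BSide b1 y)] (fun=> 1) = y - x.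
Proof.
move=> xy; rewrite Rintegral_cst //= lebesgue_measure_itv /= mul1r lte_fin -EFinD.
have [//|yx|<-] := ltgtP x y; last by rewrite subrr.
by move: xy; rewrite leNgt yx.
Qed.

Lemma sqr_Rintegral_itv_le (x y : R) b0 b1 g : x < y ->
  leb.-integrable [set` Interval (BSide b0 x) (BSide b1 y)] (fun t => (g t ^+ 2)%:E) ->
  Rintegral leb [set` Interval (BSide b0 x) (BSide b1 y)] g ^+ 2 <=
    (y - x) * Rintegral leb [set` Interval (BSide b0 x) (BSide b1 y)] (fun t => g t ^+ 2).
Proof.
move=> xy ig2.
apply: sqr_le_of_young; first by rewrite subr_gt0.
  by apply: Rintegral_ge0 => t _; exact: sqr_ge0.
move=> r r0.
have := @normr_Rintegral_mul_le_young _ (fun=> 1) g r (measurable_itv _)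
  (integrable_itv_cst x y (1 ^+ 2) b0 b1) ig2 r0.
under eq_Rintegral do rewrite mul1r.
by rewrite expr1n Rintegral_itv_one // ltW.
Qed.

End integral_bounds.

Section H10_poincare.
Context {R : realType} {a b : R}.
Local Notation leb := (@lebesgue_measure R).
Local Open Scope classical_set_scope.
Implicit Types g h v vx : R -> R.

Lemma nrm2E g : nrm2 a b g = Rintegral leb (Itv a b) (fun x => g x ^+ 2).
Proof. by apply: eq_Rintegral => x _; rewrite expr2. Qed.

Lemma nrm2_ge0 g : 0 <= nrm2 a b g.
Proof. by rewrite nrm2E; apply: Rintegral_ge0 => x _; exact: sqr_ge0. Qed.

Lemma integrable_itvoo_cc h :
  leb.-integrable `]a, b[ (EFin \o h) -> leb.-integrable `[a, b] (EFin \o h).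
Proof.
move=> /integrableP[mh fh]; apply/integrableP; split.
  apply/measurable_EFinP; apply: (measurable_fun_itv_cc (b0:=false) (b1:=true)).
  exact/measurable_EFinP.
by rewrite (@integral_itv_bndoo _ _ _ _ true false) //; exact: measurableT_comp.
Qed.

Lemma Rintegral_itvcc_oo h : leb.-integrable `]a, b[ (EFin \o h) ->
  Rintegral leb `[a, b] h = Rintegral leb `]a, b[ h.
Proof.
move=> /integrableP[mh _].
by rewrite /Rintegral (@integral_itv_bndoo _ _ _ _ true false).
Qed.

Lemma L2_integrable g : L2 a b g -> leb.-integrable `]a, b[ (EFin \o g).
Proof.
move=> [mg ig2].
have := integrable_lincomb (1 / 2) (1 / 2) (measurable_itv _)
  (integrable_itv_cst a b 1 false true) ig2.
apply: le_integrable => //; first exact/measurable_EFinP.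
move=> x _; rewrite /= lee_fin [leRHS]ger0_norm; last first.
  by rewrite addr_ge0 // mulr_ge0 // sqr_ge0.
by have := normrM_le_young 1 1 (g x) ltr01; rewrite !mul1r mulr1 expr1n.
Qed.

Lemma H10_integrable_deriv {v vx} : H10 a b v vx ->
  leb.-integrable `[a, b] (EFin \o vx).
Proof. by move=> [/L2_integrable/integrable_itvoo_cc]. Qed.

Lemma primitive_sqr_integrable {v g} : a <= b ->
  leb.-integrable `[a, b] (EFin \o g) ->
  (forall x, a <= x <= b -> v x = Rintegral leb `[a, x] g) ->
  leb.-integrable `]a, b[ (fun x => (v x ^+ 2)%:E).
Proof.
move=> ab ig vE.
pose P x := Rintegral leb `[a, x] g.
have cP2 : {within `[a, b], continuous (P \* P)}.
  by move=> x; apply: continuousM; exact: parameterized_integral_continuous.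
have : leb.-integrable `]a, b[ (EFin \o (P \* P)).
  apply: integrableS (continuous_compact_integrable (@segment_compact _ a b) cP2) => //.
  exact: subset_itvW.
apply: eq_integrable => // x; rewrite inE /= in_itv /= => /andP[ax xb] /=.
by rewrite vE ?(ltW ax) ?(ltW xb) // expr2.
Qed.

Lemma H10_sqr_integrable {v vx} : a < b -> H10 a b v vx ->
  leb.-integrable (Itv a b) (fun x => (v x ^+ 2)%:E).
Proof.
move=> ab hv; have [_ [vE _]] := hv.
exact: primitive_sqr_integrable (ltW ab) (H10_integrable_deriv hv) vE.
Qed.

Lemma sqr_H10_le {v vx x} : a < x < b -> H10 a b v vx ->
  v x ^+ 2 <= (x - a) * (b - x) / (b - a) * nrm2 a b vx.
Proof.
move=> /andP[ax xb] hv; have [[_ ivx2] [vE vb]] := hv.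
have ab := lt_trans ax xb.
have ivx := H10_integrable_deriv hv.
have ivx2c := integrable_itvoo_cc _ ivx2.
set B1 := Rintegral leb `[a, x] (fun t => vx t ^+ 2).
set B2 := Rintegral leb `]x, b] (fun t => vx t ^+ 2).
have left_bound : v x ^+ 2 <= (x - a) * B1.
  rewrite vE ?(ltW ax) ?(ltW xb) //; apply: sqr_Rintegral_itv_le => //.
  by apply: integrableS ivx2c => //; apply: subset_itvl; rewrite bnd_simp ltW.
have right_bound : v x ^+ 2 <= (b - x) * B2.
  have -> : v x = - Rintegral leb `]x, b] vx.
    rewrite -(Rintegral_itvB ivx) ?bnd_simp ?(ltW ax) ?(ltW xb) //.
    by rewrite -vE ?lexx ?(ltW ab) // vb sub0r opprK -vE ?(ltW ax) ?(ltW xb).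
  rewrite sqrrN; apply: sqr_Rintegral_itv_le => //.
  apply: integrableS ivx2c => //; apply: subset_itvr; rewrite bnd_simp.
  exact: ltW.
have B12 : B1 + B2 = nrm2 a b vx.
  rewrite nrm2E -Rintegral_itvcc_oo // /B2 -(Rintegral_itvB ivx2c) ?bnd_simp.
  - by rewrite addrC subrK.
  - exact: ltW.
  - exact: ltW.
rewrite -B12 mulrAC ler_pdivlMr ?subr_gt0 //.
have -> : b - a = (x - a) + (b - x) by ring.
have : 0 < x - a by rewrite subr_gt0.
have : 0 < b - x by rewrite subr_gt0.
nra.
Qed.

Lemma continuous_bump : continuous (fun x : R => (x - a) * (b - x)).
Proof.
move=> x; apply: (@continuousM _ _ (fun x => x - a) (fun x => b - x)).
  by apply: continuousB => //; exact: cvg_cst.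
by apply: continuousB => //; exact: cvg_cst.
Qed.

Lemma Rintegral_itv_bump : a < b ->
  Rintegral leb `]a, b[ (fun x => (x - a) * (b - x)) = (b - a) ^+ 3 / 6.
Proof.
move=> ab.
pose F (t : R) : R := (t - a) ^+ 2 * ((b - a) / 2) - (t - a) ^+ 3 / 3.
have dF (t : R) : is_derive t 1 F ((t - a) * (b - t)).
  apply: is_derive_eq; rewrite !scaler0 !subr0 !scaler1 ?addr0 ?add0r ?oppr0.
  by rewrite /GRing.scale /=; field.
have cF : continuous F.
  by move=> t; apply/differentiable_continuous/derivable1_diffP; case: (dF t).
have dFoo : derivable_oo_LRcontinuous F a b.
  split; first by move=> t _; case: (dF t).
  - exact: cvg_at_right_filter (cF a).
  - exact: cvg_at_left_filter (cF b).
have F'E : {in `]a, b[%R, F^`() =1 (fun x => (x - a) * (b - x))}.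
  by move=> t _; rewrite derive1E; case: (dF t).
have := continuous_FTC2 ab (continuous_subspaceT continuous_bump) dFoo F'E.
rewrite /Rintegral -(@integral_itv_bndoo _ _ _ _ true false); last first.
  apply/measurable_EFinP; apply: subspace_continuous_measurable_fun => //.
  exact: continuous_subspaceT continuous_bump.
by move=> ->; rewrite -EFinB /= /F; field.
Qed.

Lemma poincare_H10 {v vx} : a < b -> H10 a b v vx ->
  nrm2 a b v <= (b - a) ^+ 2 / 6 * nrm2 a b vx.
Proof.
move=> ab hv.
set k := nrm2 a b vx / (b - a).
have iw := continuous_integrable_itv _ a b false true continuous_bump.
apply: (@le_trans _ _ (Rintegral leb `]a, b[ (fun x => k * ((x - a) * (b - x))))).
  rewrite nrm2E; apply: le_Rintegral.
  - exact: measurable_itv.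
  - exact: H10_sqr_integrable ab hv.
  - exact: integrableZl_fun _ (measurable_itv _) iw.
  - move=> x; rewrite /Itv /= in_itv /= => xab.
    have -> : k * ((x - a) * (b - x)) = (x - a) * (b - x) / (b - a) * nrm2 a b vx.
      by rewrite /k; ring.
    exact: sqr_H10_le xab hv.
rewrite RintegralZl // Rintegral_itv_bump // /k.
by rewrite le_eqVlt; apply/orP; left; apply/eqP; field; rewrite subr_eq0 gt_eqF.
Qed.

End H10_poincare.

Section inner_product_bounds.
Context {R : realType} {a b : R}.
Local Notation leb := (@lebesgue_measure R).

Lemma normr_ipL2_le_young {g h : R -> R} q :
  leb.-integrable (Itv a b) (fun x => (g x ^+ 2)%:E) ->
  leb.-integrable (Itv a b) (fun x => (h x ^+ 2)%:E) -> 0 < q ->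
  `|ipL2 a b g h| <= q / 2 * nrm2 a b g + 1 / (2 * q) * nrm2 a b h.
Proof.
move=> ig ih q0; rewrite !nrm2E /ipL2.
exact: normr_Rintegral_mul_le_young q (measurable_itv _) ig ih q0.
Qed.

Lemma normr_ip1_le {u ux v vx : R -> R} r : a < b ->
  H10 a b u ux -> H10 a b v vx -> 0 < r ->
  `|ip1 a b u ux v vx| <=
    r / 2 * (nrm2 a b u + nrm2 a b ux)
    + 1 / (2 * r) * (1 + (b - a) ^+ 2 / 6) * nrm2 a b vx.
Proof.
move=> ab hu hv r0.
have := normr_ipL2_le_young r (H10_sqr_integrable ab hu) (H10_sqr_integrable ab hv) r0.
have := normr_ipL2_le_young r hu.1.2 hv.1.2 r0.
have : 1 / (2 * r) * nrm2 a b v <= 1 / (2 * r) * ((b - a) ^+ 2 / 6 * nrm2 a b vx).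
  rewrite ler_pM2l ?divr_gt0 ?mulr_gt0 //.
  exact: poincare_H10.
have := ler_normD (ipL2 a b u v) (ipL2 a b ux vx).
rewrite /ip1; lra.
Qed.

Lemma normr_Rintegral_weighted_le (mu h phi : R -> R) (A B : R) :
  (forall s, 0 < s -> 0 <= mu s) ->
  leb.-integrable (@Rplus_set R) (EFin \o mu) ->
  leb.-integrable (@Rplus_set R) (fun s => (mu s * h s)%:E) ->
  (forall s, 0 < s -> `|phi s| <= A + B * h s) ->
  `|Rintegral leb (@Rplus_set R) (fun s => mu s * phi s)| <=
    A * Rintegral leb (@Rplus_set R) mu
    + B * Rintegral leb (@Rplus_set R) (fun s => mu s * h s).
Proof.
move=> mu0 imu imh phi_le.
have mR : measurable (@Rplus_set R : set (measurableTypeR R)) by exact: measurable_itv.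
rewrite -Rintegral_lincomb //; apply: normr_Rintegral_le => //.
  exact: integrable_lincomb.
move=> s; rewrite /Rplus_set /= in_itv /= andbT => s0.
rewrite normrM ger0_norm ?mu0 //.
have -> : A * mu s + B * (mu s * h s) = mu s * (A + B * h s) by ring.
by rewrite ler_wpM2l ?mu0 ?phi_le.
Qed.

End inner_product_bounds.

Section constants.
Context {R : realType}.

(* The first three terms of the cosine series already sum to a negative
   number; the rest of the series groups into pairs of positive sign. *)
Lemma cos_17_10_lt0 : cos (17 / 10 : R) < 0.
Proof.
set x : R := 17 / 10.
rewrite -(opprK (cos _)) oppr_lt0; have /cvgN h := @cvg_cos_coeff' R x.
rewrite -(cvg_lim (@Rhausdorff R) h).
apply: (@lt_trans _ _ (\sum_(0 <= i < 3) - cos_coeff' x i)).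
  do 3 rewrite big_nat_recl//; rewrite big_nil addr0.
  rewrite /cos_coeff' -!exprnP /= (_ : 0.*2 = 0)%N // (_ : 1.*2 = 2)%N //.
  rewrite (_ : 2.*2 = 4)%N // (_ : 4`! = 24)%N // (_ : 2`! = 2)%N // fact0 /x.
  by rewrite !exprS !expr0 /=; lra.
rewrite -seriesN lt_sum_lim_series //.
  by move/cvgP in h; rewrite seriesN.
move=> d.
rewrite /cos_coeff' -!exprnP.
have e1 : (-1) ^+ (3 + d.*2) = -1 :> R.
  by rewrite -signr_odd oddD odd_double /= expr1.
have e3 : (-1) ^+ (3 + d.*2.+1) = 1 :> R.
  by rewrite -signr_odd oddD /= odd_double /= expr0.
have e2 : (3 + d.*2.+1).*2 = ((3 + d.*2).*2).+2 by rewrite addnS doubleS.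
rewrite e1 e3 e2.
set k := (3 + d.*2).*2.
have k6 : (6 <= k)%N by rewrite /k doubleD leq_addr.
clearbody k.
rewrite (factS k.+1) (factS k) !natrM !mul1r mulN1r !mulNr opprK.
have X0 : 0 < x ^+ k by rewrite exprn_gt0 // /x divr_gt0.
have F0 : 0 < k`!%:R :> R by rewrite ltr0n fact_gt0.
have K0 : 0 < (k.+2)%:R * (k.+1)%:R :> R by rewrite mulr_gt0 // ltr0n.
have -> : x ^+ k / k`!%:R - x ^+ k.+2 / ((k.+2)%:R * ((k.+1)%:R * k`!%:R)) =
    x ^+ k / k`!%:R * (1 - x ^+ 2 / ((k.+2)%:R * (k.+1)%:R)).
  rewrite !exprS; field.
  have kk : (0:R) <= k%:R := ler0n _ _.
  by apply/and3P; split; rewrite gt_eqF //; lra.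
apply: mulr_gt0; first exact: divr_gt0.
rewrite subr_gt0 ltr_pdivrMr // mul1r.
have : (56 <= k.+2 * k.+1)%N by apply: (@leq_mul 8 7); rewrite ltnS.
rewrite -(ler_nat R) natrM => h56.
apply: lt_le_trans h56; rewrite /x; lra.
Qed.

Lemma sqr_pi_le12 : pi ^+ 2 <= 12 :> R.
Proof.
have pi0 : 0 < pi :> R := pi_gt0 R.
have pi_le : pi <= 17 / 5 :> R.
  rewrite leNgt; apply/negP => pi_gt.
  have : 0 < cos (17 / 10 : R) by apply: cos_gt0_pihalf; apply/andP; split; lra.
  by have := cos_17_10_lt0; lra.
rewrite expr2; nra.
Qed.

Lemma omega_gt0 {a b : R} : a < b -> 0 < omega a b.
Proof.
move=> ab; have L0 : 0 < b - a by rewrite subr_gt0.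
have l0 : 0 < lambda1 a b by rewrite exprn_gt0 // divr_gt0 // pi_gt0.
by rewrite sqrtr_gt0 divr_gt0 // addr_gt0.
Qed.

(* [omega ^ 2 = 1 + (b - a) ^ 2 / pi ^ 2], so this is where [pi ^ 2 <= 12]
   compensates for the non-optimal Poincare constant [(b - a) ^ 2 / 6]. *)
Lemma poincare_const_le_sqr_omega {a b : R} : a < b ->
  1 + (b - a) ^+ 2 / 6 <= 2 * omega a b ^+ 2.
Proof.
move=> ab; have L0 : 0 < b - a by rewrite subr_gt0.
have pi0 : 0 < pi :> R := pi_gt0 R.
have l0 : 0 < lambda1 a b by rewrite exprn_gt0 // divr_gt0.
rewrite sqr_sqrtr ?divr_ge0 ?addr_ge0 ?ltW //.
have -> : 2 * ((1 + lambda1 a b) / lambda1 a b) = 2 + (b - a) ^+ 2 * (2 / pi ^+ 2).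
  rewrite /lambda1; move: (pi : R) pi0 => p p0.
  by field; rewrite (gt_eqF p0) (gt_eqF L0).
have : 1 / 6 <= 2 / pi ^+ 2 :> R.
  by rewrite ler_pdivlMr ?exprn_gt0 // mulrAC ler_pdivrMr //; have := sqr_pi_le12; lra.
have : 0 <= (b - a) ^+ 2 by exact: sqr_ge0.
nra.
Qed.

End constants.

Section comparison.
Context {R : realType}.

Lemma bound_lincomb_ge0 {Q T w k e : R} :
  `|T| <= w * Q -> `|k| <= e -> 0 <= e * (w * Q) + k * T.
Proof.
move=> hT hk.
have := ler_pM (normr_ge0 k) (normr_ge0 T) hk hT.
rewrite -normrM -normrN => hkT.
have := ler_norm (- (k * T)); lra.
Qed.

Lemma affine_comparison (Q T w al ep : R) :
  0 < w -> 0 < al -> al < ep -> ep < 1 / (2 * w) -> `|T| <= w * Q ->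
  Q - al * T <= (Q - ep * T) / (1 - w * ep) /\
  (Q - ep * T) / (1 - w * ep) <= (Q - al * T) / (1 - 2 * w * ep).
Proof.
move=> w0 al0 alep epw hT.
have p0 : 0 < w * ep by rewrite mulr_gt0 // (lt_trans al0).
have p1 : 2 * (w * ep) < 1.
  by move: epw; rewrite ltr_pdivlMr ?mulr_gt0 // mulrC mulrA.
split.
- rewrite ler_pdivlMr; last lra.
  have k_le : `|- (ep - al + w * ep * al)| <= ep.
    by rewrite normrN ler_norml; apply/andP; split; nra.
  have := bound_lincomb_ge0 hT k_le.
  have -> : (Q - al * T) * (1 - w * ep) =
      Q - ep * T - (ep * (w * Q) + - (ep - al + w * ep * al) * T) by ring.
  lra.
- rewrite ler_pdivrMr; last lra.
  rewrite mulrAC ler_pdivlMr; last lra.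
  have k_le : `|ep - al - 2 * w * ep * ep + w * ep * al| <= ep.
    by rewrite ler_norml; apply/andP; split; nra.
  have := bound_lincomb_ge0 hT k_le.
  have -> : (Q - ep * T) * (1 - 2 * w * ep) = (Q - al * T) * (1 - w * ep)
      - (ep * (w * Q) + (ep - al - 2 * w * ep * ep + w * ep * al) * T) by ring.
  lra.
Qed.

End comparison.

Definition Lambda0 {R : realType} (a b : R) (f mu u ux : R -> R)
    (etax : R -> R -> R) : R :=
  normH2 a b mu u ux etax
  + 2 / kappa mu * Rintegral lebesgue_measure (@Rplus_set R)
                     (fun s => mu s * ipL2 a b (primF a f) (etax s))
  + 2 / kappa mu * nrm2 a b (primF a f).

Definition Lambda_slope {R : realType} (a b : R) (mu u ux : R -> R)
    (eta etax : R -> R -> R) : R :=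
  Rintegral lebesgue_measure (@Rplus_set R)
    (fun s => mu s * ip1 a b u ux (eta s) (etax s))
  / Num.sqrt (kappa mu).

Section Lambda_bounds.
Context {R : realType} {a b : R} {f mu u ux : R -> R} {eta etax : R -> R -> R}.
Local Notation leb := (@lebesgue_measure R).

Lemma Lambda_affine e : Lambda a b f mu e u ux eta etax =
  Lambda0 a b f mu u ux etax - e * Lambda_slope a b mu u ux eta etax.
Proof. by rewrite /Lambda /Lambda0 /Lambda_slope; ring. Qed.

Let normM2 := Rintegral leb (@Rplus_set R) (fun s => mu s * nrm2 a b (etax s)).

Hypotheses (ab : a < b) (mu_ge0 : forall s, 0 < s -> 0 <= mu s)
  (mu_int : leb.-integrable (@Rplus_set R) (EFin \o mu))
  (kappa_gt0 : 0 < kappa mu) (eta_mem : memory_elt a b mu eta etax).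

(* Young's inequality with weight [2 / kappa] absorbs the forcing term into
   half of the memory norm. *)
Lemma Lambda0_ge : L2 a b f ->
  nrm2 a b u + nrm2 a b ux + normM2 / 2 <= Lambda0 a b f mu u ux etax.
Proof.
move=> hf; have [eta_H10 [_ mu_eta_int]] := eta_mem.
have F2 : leb.-integrable (Itv a b) (fun x => (primF a f x ^+ 2)%:E).
  apply: primitive_sqr_integrable (ltW ab) _ (fun _ _ => erefl).
  exact/integrable_itvoo_cc/L2_integrable.
have q0 : 0 < 2 / kappa mu by rewrite divr_gt0.
have := normr_Rintegral_weighted_le _ _ (fun s => ipL2 a b (primF a f) (etax s))
  _ _ mu_ge0 mu_int mu_eta_int
  (fun s s0 => normr_ipL2_le_young _ F2 (eta_H10 s s0).1.2 q0).
rewrite -/(kappa mu) -/normM2 ler_norml => /andP[P_ge _].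
have := ler_wpM2l (ltW q0) P_ge.
rewrite /Lambda0 /normH2 -/normM2.
have K0 := kappa_gt0; set K := kappa mu in q0 K0 *; set Phi := nrm2 a b (primF a f).
have -> : 2 / K * - (2 / K / 2 * Phi * K + 1 / (2 * (2 / K)) * normM2) =
    - (2 / K * Phi) - normM2 / 2 by field; rewrite gt_eqF.
lra.
Qed.

Lemma normM2_ge0 : 0 <= normM2.
Proof.
apply: Rintegral_ge0 => s; rewrite /Rplus_set /= in_itv /= andbT => s0.
by rewrite mulr_ge0 ?mu_ge0 ?nrm2_ge0.
Qed.

(* Young's inequality with weight [2 omega / sqrt kappa] balances the two
   factors of the coupling term. *)
Lemma normr_Lambda_slope_le : H10 a b u ux ->
  `|Lambda_slope a b mu u ux eta etax|
    <= omega a b * (nrm2 a b u + nrm2 a b ux + normM2 / 2).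
Proof.
move=> hu; have [eta_H10 [_ mu_eta_int]] := eta_mem.
have w0 := omega_gt0 ab; set w := omega a b in w0 *.
have sK0 : 0 < Num.sqrt (kappa mu) by rewrite sqrtr_gt0.
set sK := Num.sqrt (kappa mu) in sK0 *.
have r0 : 0 < 2 * w / sK by rewrite divr_gt0 ?mulr_gt0.
have := normr_Rintegral_weighted_le _ _ (fun s => ip1 a b u ux (eta s) (etax s))
  _ _ mu_ge0 mu_int mu_eta_int (fun s s0 => normr_ip1_le _ ab hu (eta_H10 s s0) r0).
rewrite -/(kappa mu) -/normM2 -[kappa mu]sqr_sqrtr ?(ltW kappa_gt0) // -/sK.
rewrite /Lambda_slope -/sK normrM normfV (gtr0_norm sK0) ler_pdivrMr // => J_le.
apply: le_trans J_le _.
set U := nrm2 a b u + nrm2 a b ux; set c := (b - a) ^+ 2 / 6.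
have : sK / (4 * w) * ((1 + c) * normM2) <= sK / (4 * w) * (2 * w ^+ 2 * normM2).
  apply: ler_wpM2l; first by rewrite divr_ge0 ?mulr_ge0 ?ltW.
  exact: ler_wpM2r normM2_ge0 _ _ (poincare_const_le_sqr_omega ab).
have -> : sK / (4 * w) * (2 * w ^+ 2 * normM2) = w * (normM2 / 2) * sK.
  by field; rewrite gt_eqF.
have -> : 2 * w / sK / 2 * U * sK ^+ 2 + 1 / (2 * (2 * w / sK)) * (1 + c) * normM2 =
    w * U * sK + sK / (4 * w) * ((1 + c) * normM2) by field; rewrite !gt_eqF.
lra.
Qed.

End Lambda_bounds.

Theorem lemma6p1 (R : realType) (a b : R) (f mu : R -> R)
    (u ux : R -> R) (eta etax : R -> R -> R) (alpha eps : R) :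
  a < b -> L2 a b f -> memory_kernel mu ->
  H10 a b u ux -> memory_elt a b mu eta etax ->
  0 < alpha -> alpha < eps -> eps < 1 / (2 * omega a b) ->
  Lambda a b f mu alpha u ux eta etax
    <= Lambda a b f mu eps u ux eta etax / (1 - omega a b * eps) /\
  Lambda a b f mu eps u ux eta etax / (1 - omega a b * eps)
    <= Lambda a b f mu alpha u ux eta etax / (1 - 2 * omega a b * eps).
Proof.
move=> ab hf hmu hu heta alpha_gt0 alpha_lt_eps eps_lt.
have [mu_ge0 [_ [_ [_ [mu_int [kappa_gt0 _]]]]]] := hmu.
rewrite !Lambda_affine; apply: affine_comparison => //; first exact: omega_gt0.
apply: le_trans (normr_Lambda_slope_le ab mu_ge0 mu_int kappa_gt0 heta hu) _.
apply: ler_wpM2l; first exact: ltW (omega_gt0 ab).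
exact: Lambda0_ge ab mu_ge0 mu_int kappa_gt0 heta hf.
Qed.
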